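(* Let $\mathcal H_1=\mathcal H_2=\mathbb C^2$ and let $|\phi_1\rangle\in\mathcal H_2\otimes\mathcal H_1$ be a unit vector. The two-outcome qubit $1$-tester $T_1=\frac12|\phi_1\rangle\langle\phi_1|$, $T_2=\frac12(I_2\otimes I_1-|\phi_1\rangle\langle\phi_1|)$ (with normalization $I_2\otimes\frac12I_1$) is extremal if and only if $|\phi_1\rangle$ is not a product vector $|f\rangle\otimes|e\rangle$.
   Context: A quantum $1$-tester with $M$ outcomes is a family of positive operators $\{T_i\}_{i=1}^M$ on $\mathcal H_2\otimes\mathcal H_1$ with $\sum_iT_i=I_2\otimes\rho$ for a density operator $\rho$ on $\mathcal H_1$; extremal means an extreme point of the convex set of all such testers with $M$ outcomes. *)

(* Complex numbers are modelled by algC (algebraic complex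
   numbers, a numClosedFieldType with conjugation); the tensor product of
   matrices is the Kronecker product [tprod] from mathcomp character. *)
From HB Require Import structures.
From mathcomp Require Import all_boot all_order all_algebra all_field all_character.
Set Implicit Arguments. Unset Strict Implicit. Unset Printing Implicit Defensive.
Import Order.TTheory GRing.Theory Num.Theory.
Local Open Scope ring_scope.

Definition adjmx (m n : nat) (A : 'M[algC]_(m, n)) : 'M[algC]_(n, m) :=
  (map_mx Num.conj A)^T.

Definition psdmx (n : nat) (A : 'M[algC]_n) : Prop :=
  forall v : 'cV[algC]_n, 0 <= (adjmx v *m A *m v) 0 0.

Definition density (n : nat) (rho : 'M[algC]_n) : Prop :=
  psdmx rho /\ \tr rho = 1.

Definition is_tester (n2 n1 M : nat) (T : 'I_M -> 'M[algC]_(n2 * n1)) : Prop :=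
  (forall i, psdmx (T i)) /\
  exists rho : 'M[algC]_n1, density rho /\
    \sum_(i < M) T i = tprod (1%:M : 'M[algC]_n2) rho.

Definition extremal_tester (n2 n1 M : nat) (T : 'I_M -> 'M[algC]_(n2 * n1)) : Prop :=
  is_tester T /\
  forall (T' T'' : 'I_M -> 'M[algC]_(n2 * n1)) (t : algC),
    is_tester T' -> is_tester T'' -> 0 < t < 1 ->
    (forall i, T i = t *: T' i + (1 - t) *: T'' i) ->
    forall i, T' i = T i /\ T'' i = T i.

Definition qubit_tester (phi : 'cV[algC]_(2 * 2)) (i : 'I_2) : 'M[algC]_(2 * 2) :=
  if val i == 0%N then 2^-1 *: (phi *m adjmx phi)
  else 2^-1 *: (1%:M - phi *m adjmx phi).

From HB Require Import structures.
From mathcomp Require Import all_boot all_order all_algebra all_field all_character.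
From mathcomp Require Import ring.
Set Implicit Arguments. Unset Strict Implicit. Unset Printing Implicit Defensive.
Import Order.TTheory GRing.Theory Num.Theory.
Local Open Scope ring_scope.

(* If phi = f (x) e, the tester is the midpoint of the testers (P, 1 (x) E - P)
   and (0, 1 (x) (1 - E)), where P and E are the orthogonal projections onto phi
   and e.  Conversely, let T = t X + (1 - t) Y with X a tester and Y positive.
   Positivity forces X_1 to be supported on the line of phi and X_2 to kill phi,
   so (1 (x) rho) phi = a phi for the normalisation rho of X.  A nonzero row m of
   rho - a would give (1 (x) m) phi = 0, which on C^2 (x) C^2 makes phi a product
   vector; hence rho = a, the trace gives a = 1/2, and X = T. *)

Lemma ord2P (i : 'I_2) : i = 0 \/ i = 1.
Proof. by case: i => [[|[|//]] Hi]; [left|right]; apply: val_inj. Qed.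

Lemma big_ord2 (V : nmodType) (F : 'I_2 -> V) : \sum_(i < 2) F i = F 0 + F 1.
Proof. by rewrite big_ord_recr big_ord1; congr (F _ + F _); apply: val_inj. Qed.

Lemma eq_mulmx_cV (R : pzSemiRingType) m n (A B : 'M[R]_(m, n)) :
  (forall v : 'cV_n, A *m v = B *m v) -> A = B.
Proof.
move=> eqAB; apply/matrixP => i j.
by move/matrixP/(_ i 0): (eqAB (delta_mx j 0)); rewrite -!colE !mxE.
Qed.

Section KroneckerProduct.
Variable F : fieldType.

Lemma tprod_is_linear m1 n1 (A : 'M[F]_(m1, n1)) m2 n2 :
  linear (@tprod F m1 n1 A m2 n2).
Proof.
elim: m1 n1 A => [|m1 IH] n1 A k B C /=; first by rewrite scaler0 addr0.
by rewrite IH linearP scale_col_mx add_col_mx.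
Qed.

HB.instance Definition _ m1 n1 (A : 'M[F]_(m1, n1)) m2 n2 :=
  GRing.isSemilinear.Build _ _ _ _ (@tprod F m1 n1 A m2 n2)
    (GRing.semilinear_linear (@tprod_is_linear m1 n1 A m2 n2)).

Lemma tprod_row_mx m1 n1 (A : 'M[F]_(m1, 1 + n1)) m2 n2 (B : 'M[F]_(m2, n2)) :
  tprod A B = row_mx (trow (lsubmx A)^T B^T)^T (tprod (rsubmx A) B).
Proof.
elim: m1 n1 A m2 n2 B => [|m1 IH] n1 A m2 n2 B /=; first by rewrite trmx0 row_mx0.
rewrite !IH tr_row_mx -block_mxEv -block_mxEh.
pose A1 := A : 'M_(1 + m1, 1 + n1).
have -> : dsubmx (rsubmx A1) = rsubmx (dsubmx A1) by apply/matrixP => i j; rewrite !mxE.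
have -> : rsubmx (usubmx A1) = usubmx (rsubmx A1) by apply/matrixP => i j; rewrite !mxE.
have -> : lsubmx (dsubmx A1) = dsubmx (lsubmx A1) by apply/matrixP => i j; rewrite !mxE.
congr block_mx; first by rewrite !mxE linearZ /= trmxK.
by rewrite -trmx_dsub.
Qed.

Lemma tr_tprod m1 n1 (A : 'M[F]_(m1, n1)) m2 n2 (B : 'M[F]_(m2, n2)) :
  (tprod A B)^T = tprod A^T B^T.
Proof.
elim: m1 n1 A => [|m1 IH] n1 A /=; first by apply/matrixP => i [].
rewrite tr_col_mx IH (tprod_row_mx (A^T : 'M_(n1, 1 + m1))).
by rewrite -(trmx_usub (A : 'M_(1 + m1, n1))) -(trmx_dsub (A : 'M_(1 + m1, n1))) !trmxK.
Qed.

Lemma map_tprod (K : fieldType) (f : {rmorphism F -> K}) m1 n1 (A : 'M[F]_(m1, n1))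
    m2 n2 (B : 'M[F]_(m2, n2)) :
  map_mx f (tprod A B) = tprod (map_mx f A) (map_mx f B).
Proof.
have map_trow n (r : 'rV[F]_n) : map_mx f (trow r B) = trow (map_mx f r) (map_mx f B).
  elim: n r => [|n IH] r /=; first by rewrite map_mx0.
  by rewrite map_row_mx IH map_mxZ map_rsubmx !mxE.
elim: m1 n1 A => [|m1 IH] n1 A /=; first by rewrite map_mx0.
by rewrite map_col_mx IH map_trow map_usubmx map_dsubmx.
Qed.

Lemma tprod1_mul n m1 n1 p1 (B : 'M[F]_(m1, n1)) (C : 'M[F]_(n1, p1)) :
  tprod (1%:M : 'M_n) (B *m C) = tprod (1%:M : 'M_n) B *m tprod (1%:M : 'M_n) C.
Proof. by rewrite -tprodE mul1mx. Qed.

Lemma tprod1_scalar n1 n (a : F) :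
  tprod (1%:M : 'M_n1) (a%:M : 'M_n) = a%:M.
Proof. by rewrite -(scalemx1 n a) linearZ /= tprod1 scalemx1. Qed.

Lemma tprod_cV2_mx1 (f : 'cV[F]_2) : tprod f (1%:M : 'M_1) = f.
Proof.
apply/colP => i; rewrite /= !mxE.
case: splitP => [j ij|j ij]; rewrite !mxE.
  case: splitP => [k _|[]//]; rewrite !mxE (ord1 j) (ord1 k) eqxx mulr1.
  by congr (f _ _); apply: ord_inj; rewrite (ord1 j) in ij; exact/esym.
case: (splitP j) => [k jk|[]//]; rewrite !mxE; case: splitP => [l _|[]//].
rewrite !mxE (ord1 k) (ord1 l) eqxx mulr1.
by congr (f _ _); apply: ord_inj; rewrite (ord1 k) in jk; rewrite jk in ij; exact/esym.
Qed.

Lemma tprod1_kernel n2 n1 k (M : 'M[F]_(k, n1)) (e : 'cV_n1) (a : 'rV_n1)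
    (W : 'M_(n1, k)) (phi : 'cV_(n2 * n1)) :
  e *m a + W *m M = 1%:M -> tprod (1%:M : 'M_n2) M *m phi = 0 ->
  phi = tprod (1%:M : 'M_n2) e *m (tprod (1%:M : 'M_n2) a *m phi).
Proof.
move=> decomp1 Mphi.
rewrite -{1}[phi]mul1mx -(@tprod1 F n2 n1) -decomp1 linearD /= mulmxDl !tprod1_mul.
by rewrite -!mulmxA Mphi mulmx0 addr0.
Qed.

End KroneckerProduct.

Lemma adjmx_is_zmod_morphism m n : zmod_morphism (@adjmx m n).
Proof. by move=> A B; apply/matrixP => i j; rewrite !mxE rmorphB. Qed.

HB.instance Definition _ m n :=
  GRing.isZmodMorphism.Build _ _ (@adjmx m n) (@adjmx_is_zmod_morphism m n).

Lemma adjmxZ m n a (A : 'M[algC]_(m, n)) : adjmx (a *: A) = a^* *: adjmx A.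
Proof. by apply/matrixP => i j; rewrite !mxE rmorphM. Qed.

Lemma adjmxM m n p (A : 'M[algC]_(m, n)) (B : 'M_(n, p)) :
  adjmx (A *m B) = adjmx B *m adjmx A.
Proof. by rewrite /adjmx map_mxM trmx_mul. Qed.

Lemma adjmxK m n (A : 'M[algC]_(m, n)) : adjmx (adjmx A) = A.
Proof. by apply/matrixP => i j; rewrite !mxE conjCK. Qed.

Lemma adjmx1 n : adjmx (1%:M : 'M[algC]_n) = 1%:M.
Proof. by apply/matrixP => i j; rewrite !mxE conjC_nat eq_sym. Qed.

Lemma adjmx_tprod m1 n1 (A : 'M[algC]_(m1, n1)) m2 n2 (B : 'M[algC]_(m2, n2)) :
  adjmx (tprod A B) = tprod (adjmx A) (adjmx B).
Proof. by rewrite /adjmx map_tprod tr_tprod. Qed.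

Lemma dotmx_sum n (v : 'cV[algC]_n) : (adjmx v *m v) 0 0 = \sum_i `|v i 0| ^+ 2.
Proof. by rewrite mxE; apply: eq_bigr => i _; rewrite !mxE normCK mulrC. Qed.

Lemma dotmx_ge0 n (v : 'cV[algC]_n) : 0 <= (adjmx v *m v) 0 0.
Proof. by rewrite dotmx_sum sumr_ge0 // => i _; rewrite exprn_ge0. Qed.

Lemma dotmx_eq0 n (v : 'cV[algC]_n) : ((adjmx v *m v) 0 0 == 0) = (v == 0).
Proof.
apply/idP/eqP => [|->]; last by rewrite mulmx0 mxE.
rewrite dotmx_sum psumr_eq0 => [/allP v0|i _]; last by rewrite exprn_ge0.
apply/colP => i; have /implyP := v0 i (mem_index_enum i).
by rewrite sqrf_eq0 normr_eq0 mxE => /(_ isT)/eqP.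
Qed.

Lemma unit_cV_neq0 n (phi : 'cV[algC]_n) : adjmx phi *m phi = 1%:M -> phi != 0.
Proof.
by move=> unit_phi; rewrite -dotmx_eq0 unit_phi mxE eqxx oner_neq0.
Qed.

Definition hform n (A : 'M[algC]_n) (x y : 'cV[algC]_n) := (adjmx x *m A *m y) 0 0.

Lemma hformD n (A B : 'M[algC]_n) x y : hform (A + B) x y = hform A x y + hform B x y.
Proof. by rewrite /hform mulmxDr mulmxDl [fun_of_matrix (_ + _) _ _]mxE. Qed.

Lemma hformZ n a (A : 'M[algC]_n) x y : hform (a *: A) x y = a * hform A x y.
Proof. by rewrite /hform -scalemxAr -scalemxAl [fun_of_matrix (_ *: _) _ _]mxE. Qed.

Lemma hform_expand n (A : 'M[algC]_n) w u s :
  hform A (w + s *: u) (w + s *: u) =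
  hform A w w + s * hform A w u + s^* * hform A u w + s^* * s * hform A u u.
Proof.
rewrite /hform [adjmx _]raddfD /= adjmxZ !mulmxDl !mulmxDr -!scalemxAl -!scalemxAr.
by rewrite ![fun_of_matrix (_ + _) _ _]mxE ![fun_of_matrix (_ *: _) _ _]mxE !addrA mulrA.
Qed.

Lemma adjmx_delta n (k : 'I_n) : adjmx (delta_mx k 0 : 'cV[algC]_n) = delta_mx 0 k.
Proof. by apply/matrixP => i j; rewrite !mxE conjC_nat andbC. Qed.

Lemma hform_delta_l n (A : 'M[algC]_n) k w : hform A (delta_mx k 0) w = (A *m w) k 0.
Proof. by rewrite /hform adjmx_delta -mulmxA -rowE mxE. Qed.

Lemma hform_delta_r n (A : 'M[algC]_n) k w :
  hform A w (delta_mx k 0) = (adjmx w *m A) 0 k.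
Proof. by rewrite /hform -colE mxE. Qed.

Lemma psdmxZ n a (A : 'M[algC]_n) : 0 <= a -> psdmx A -> psdmx (a *: A).
Proof.
move=> a_ge0 psdA v; change (0 <= hform (a *: A) v v).
by rewrite hformZ mulr_ge0 //; apply: psdA.
Qed.

Lemma psdmx_comb_form0 n (X Y : 'M[algC]_n) t u :
  psdmx X -> psdmx Y -> 0 < t -> t <= 1 ->
  hform (t *: X + (1 - t) *: Y) u u = 0 -> hform X u u = 0.
Proof.
move=> psdX psdY t_gt0 t_le1 /eqP; rewrite hformD !hformZ.
have X_ge0 : 0 <= hform X u u := psdX u.
have Y_ge0 : 0 <= hform Y u u := psdY u.
rewrite paddr_eq0 ?mulr_ge0 ?subr_ge0 ?(ltW t_gt0) //.
by rewrite mulf_eq0 gt_eqF //= => /andP[/eqP].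
Qed.

(* The witness r = - c / (1 + d) makes the quadratic equal to - (c / (1 + d))^2. *)
Lemma real_quadratic_ge0_lin0 (c d : algC) : 0 <= d ->
  (forall r : algC, r \is Num.real -> 0 <= r * c + r ^+ 2 * d) -> c = 0.
Proof.
move=> d_ge0 quad_ge0.
have c_real : c \is Num.real.
  have := quad_ge0 1 (rpred1 _); rewrite mul1r expr1n mul1r => cd_ge0.
  by rewrite -(addrK d c) rpredB // ger0_real.
have d1_gt0 : 0 < 1 + d by rewrite ltr_wpDr.
pose t := (1 + d)^-1.
have t_gt0 : 0 < t by rewrite invr_gt0.
have r_real : - (c * t) \is Num.real by rewrite rpredN rpredM // gtr0_real.
have := quad_ge0 _ r_real.
have -> : - (c * t) * c + (- (c * t)) ^+ 2 * d = - (t * c) ^+ 2.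
  by rewrite /t; field; rewrite gt_eqF.
rewrite oppr_ge0 => tc_le0.
have /eqP : (t * c) ^+ 2 = 0.
  have tc_real : t * c \is Num.real by rewrite rpredM // gtr0_real.
  by apply/eqP; rewrite eq_le tc_le0 -real_normK // exprn_ge0.
by rewrite sqrf_eq0 mulf_eq0 gt_eqF //= => /eqP.
Qed.

Lemma psdmx_form0 n (A : 'M[algC]_n) w : psdmx A -> hform A w w = 0 ->
  forall u, hform A u w = 0 /\ hform A w u = 0.
Proof.
(* Probing w + s u with s real and with s purely imaginary isolates b1 + b2 and
   b1 - b2. *)
move=> psdA Aw0 u; set b1 := hform A w u; set b2 := hform A u w.
have d_ge0 : 0 <= hform A u u by apply: psdA.
have sum0 : b1 + b2 = 0.
  apply: (real_quadratic_ge0_lin0 d_ge0) => r r_real.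
  have : 0 <= hform A (w + r *: u) (w + r *: u) := psdA _.
  rewrite hform_expand Aw0 (conj_Creal r_real).
  by rewrite add0r -mulrDr expr2.
have diff0 : 'i * (b1 - b2) = 0.
  apply: (real_quadratic_ge0_lin0 d_ge0) => r r_real.
  have : 0 <= hform A (w + (r * 'i) *: u) (w + (r * 'i) *: u) := psdA _.
  rewrite hform_expand Aw0 [(r * 'i)^*]rmorphM /= (conj_Creal r_real) conjCi add0r.
  have -> : r * - 'i * (r * 'i) = r ^+ 2.
    by rewrite mulrN mulNr mulrACA -expr2 mulCii mulrN1 opprK.
  by rewrite mulrN mulNr !mulrBr !mulrA.
move/eqP: diff0; rewrite mulf_eq0 (negbTE (@neq0Ci algC)) subr_eq0 => /eqP b12.
by move: sum0; rewrite b12 -mulr2n => /eqP; rewrite mulrn_eq0 => /eqP.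
Qed.

Lemma psdmx_kernel n (A : 'M[algC]_n) w : psdmx A -> hform A w w = 0 ->
  A *m w = 0 /\ adjmx w *m A = 0.
Proof.
move=> psdA Aw0; have form0 := psdmx_form0 psdA Aw0.
split; [apply/colP => k | apply/rowP => k]; rewrite [RHS]mxE.
  by rewrite -hform_delta_l; case: (form0 (delta_mx k 0)).
by rewrite -hform_delta_r; case: (form0 (delta_mx k 0)).
Qed.

Definition orthoproj n (P : 'M[algC]_n) := adjmx P = P /\ P *m P = P.

Lemma psdmx_orthoproj n (P : 'M[algC]_n) : orthoproj P -> psdmx P.
Proof.
by case=> adjP PP v; rewrite -PP -{1}adjP mulmxA -adjmxM -mulmxA dotmx_ge0.
Qed.

Lemma orthoproj0 n : orthoproj (0 : 'M_n).
Proof. by split; [exact: raddf0 | exact: mulmx0]. Qed.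

Lemma orthoproj1 n : orthoproj (1%:M : 'M_n).
Proof. by split; [exact: adjmx1 | exact: mulmx1]. Qed.

Lemma orthoprojB n (G P : 'M[algC]_n) :
  orthoproj G -> orthoproj P -> G *m P = P -> orthoproj (G - P).
Proof.
move=> [adjG GG] [adjP PP] GP.
have PG : P *m G = P by rewrite -{1}adjP -{1}adjG -adjmxM GP adjP.
split; first by rewrite raddfB /= adjG adjP.
by rewrite mulmxBl !mulmxBr GG GP PG PP subrr subr0.
Qed.

Lemma orthoproj_tprod m n (P : 'M[algC]_m) (Q : 'M[algC]_n) :
  orthoproj P -> orthoproj Q -> orthoproj (tprod P Q).
Proof.
by move=> [adjP PP] [adjQ QQ]; split; rewrite ?adjmx_tprod ?adjP ?adjQ // -tprodE PP QQ.
Qed.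

Lemma orthoproj_unit n (phi : 'cV[algC]_n) :
  adjmx phi *m phi = 1%:M -> orthoproj (phi *m adjmx phi).
Proof.
move=> unit_phi; split; first by rewrite adjmxM adjmxK.
by rewrite mulmxA -(mulmxA phi) unit_phi mulmx1.
Qed.

Definition lineproj n (v : 'cV[algC]_n) := ((adjmx v *m v) 0 0)^-1 *: (v *m adjmx v).

Section LineProjector.
Variables (n : nat) (v : 'cV[algC]_n).
Hypothesis v_neq0 : v != 0.

Let s := (adjmx v *m v) 0 0.
Let s_neq0 : s != 0. Proof. by rewrite dotmx_eq0. Qed.

Lemma lineprojK : lineproj v *m v = v.
Proof.
by rewrite -scalemxAl -mulmxA [X in v *m X]mx11_scalar mul_mx_scalar scalerA mulVf ?scale1r.
Qed.

Lemma orthoproj_lineproj : orthoproj (lineproj v).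
Proof.
split; last by rewrite {2}/lineproj -scalemxAr mulmxA lineprojK.
have s_real : s^-1 \is Num.real by rewrite rpredV ger0_real ?dotmx_ge0.
by rewrite adjmxZ adjmxM adjmxK (conj_Creal s_real).
Qed.

Lemma mxtrace_lineproj : \tr (lineproj v) = 1.
Proof. by rewrite mxtraceZ mxtrace_mulC trace_mx11 mulVf. Qed.

End LineProjector.

Lemma psdmx_supp_line n (X : 'M[algC]_n) (phi : 'cV[algC]_n) :
  psdmx X -> adjmx phi *m phi = 1%:M ->
  (forall u : 'cV_n, adjmx phi *m u = 0 -> hform X u u = 0) ->
  X = hform X phi phi *: (phi *m adjmx phi).
Proof.
move=> psdX unit_phi Xperp; set a := hform X phi phi.
have ker (u : 'cV_n) : adjmx phi *m u = 0 -> X *m u = 0 /\ adjmx u *m X = 0.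
  by move=> phi_u; apply: psdmx_kernel psdX (Xperp u phi_u).
have Xphi : X *m phi = a *: phi.
  set u := X *m phi - a *: phi.
  have phi_u : adjmx phi *m u = 0.
    by rewrite mulmxBr -scalemxAr unit_phi scalemx1 mulmxA [_ *m phi]mx11_scalar subrr.
  have u_phi : adjmx u *m phi = 0 by rewrite -[phi]adjmxK -adjmxM phi_u raddf0.
  apply/eqP; rewrite -subr_eq0 -/u -dotmx_eq0 {2}/u mulmxBr -scalemxAr u_phi scaler0 subr0.
  by rewrite mulmxA (ker u phi_u).2 mul0mx mxE.
apply: eq_mulmx_cV => v; set w := phi *m (adjmx phi *m v).
have perp : adjmx phi *m (v - w) = 0 by rewrite mulmxBr !mulmxA unit_phi mul1mx subrr.
rewrite -[v in LHS](subrK w) mulmxDr (ker _ perp).1 add0r.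
by rewrite /w mulmxA Xphi -!scalemxAl !mulmxA.
Qed.

Definition is_product (F : fieldType) n2 n1 (phi : 'cV[F]_(n2 * n1)) :=
  exists (f : 'cV_n2) (e : 'cV_n1), phi = tprod f e.

Lemma rV2_complement (m : 'rV[algC]_2) : m != 0 ->
  exists (e : 'cV_2) (a : 'rV_2) (w : 'cV_2), e *m a + w *m m = 1%:M.
Proof.
move=> m_neq0; set s := `|m 0 0| ^+ 2 + `|m 0 1| ^+ 2.
have s_neq0 : s != 0.
  apply: contraNneq m_neq0 => /eqP; rewrite paddr_eq0 ?exprn_ge0 // !sqrf_eq0 !normr_eq0.
  by case/andP => /eqP m0 /eqP m1; apply/eqP/rowP => j; rewrite mxE; case: (ord2P j) => ->.
(* e spans the kernel of m, and 1 = (e e^* + m^* m) / |m|^2. *)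
pose e : 'cV_2 := \col_i (if i == 0 then m 0 1 else - m 0 0).
exists e, (s^-1 *: adjmx e), (s^-1 *: adjmx m).
apply/matrixP => i j; rewrite !mxE !big_ord1 !mxE.
case: (ord2P i) => ->; case: (ord2P j) => ->; rewrite ?mxE /= ?rmorphN.
all: by move: s_neq0; rewrite /s !normCK => s_neq0; field.
Qed.

Lemma tprod1_kernel_product (phi : 'cV[algC]_(2 * 2)) (m : 'rV_2) :
  m != 0 -> tprod (1%:M : 'M_2) m *m phi = 0 -> is_product phi.
Proof.
move=> m_neq0 m_phi; have [e [a [w decomp1]]] := rV2_complement m_neq0.
set g := tprod (1%:M : 'M_2) a *m phi.
exists g, e; rewrite {1}(tprod1_kernel decomp1 m_phi) -/g.
by rewrite -[in RHS](mul1mx g) -[in RHS](mulmx1 e) tprodE tprod_cV2_mx1.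
Qed.

Lemma entangled_tprod1_eigen (phi : 'cV[algC]_(2 * 2)) (rho : 'M_2) a :
  ~ is_product phi -> tprod (1%:M : 'M_2) rho *m phi = a *: phi -> rho = a%:M.
Proof.
move=> not_prod rho_phi; apply/eqP; rewrite -subr_eq0; apply/negPn/negP => M_neq0.
have [j Mj] : exists j, row j (rho - a%:M) != 0.
  apply/existsP; apply: contraNT M_neq0 => /existsPn Mrows0.
  by apply/eqP/row_matrixP => j; rewrite row0; apply/eqP/negPn/Mrows0.
apply: not_prod; apply: (tprod1_kernel_product Mj).
have tprodM : tprod (1%:M : 'M_2) (rho - a%:M) = tprod 1%:M rho - a%:M.
  by rewrite linearB; congr (_ - _); exact: tprod1_scalar.
by rewrite rowE tprod1_mul -mulmxA tprodM mulmxBl rho_phi mul_scalar_mx subrr mulmx0.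
Qed.

Lemma is_tester2 n2 n1 (T : 'I_2 -> 'M[algC]_(n2 * n1)) (rho : 'M_n1) :
  density rho -> psdmx (T 0) -> psdmx (T 1) -> T 0 + T 1 = tprod 1%:M rho ->
  is_tester T.
Proof.
move=> rho_dens T0 T1 sumT; split; first by move=> i; case: (ord2P i) => ->.
by exists rho; rewrite big_ord2.
Qed.

Lemma qubit_tester_is_tester (phi : 'cV[algC]_(2 * 2)) :
  adjmx phi *m phi = 1%:M -> is_tester (qubit_tester phi).
Proof.
move=> unit_phi; have projP := orthoproj_unit unit_phi.
have half_ge0 : 0 <= 2^-1 :> algC by rewrite invr_ge0 ler0n.
apply: (@is_tester2 _ _ _ ((2 : algC)^-1)%:M).
- split; last by rewrite mxtrace_scalar; field.
  by rewrite -scalemx1; apply: psdmxZ half_ge0 (psdmx_orthoproj (orthoproj1 _)).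
- exact: psdmxZ half_ge0 (psdmx_orthoproj projP).
- apply: psdmxZ half_ge0 (psdmx_orthoproj (orthoprojB (orthoproj1 _) projP _)).
  exact: mul1mx.
- by rewrite tprod1_scalar /qubit_tester /= -scalerDr addrC subrK scalemx1.
Qed.

Lemma qubit_tester_summand_eq (phi : 'cV[algC]_(2 * 2)) (X Y : 'I_2 -> 'M_(2 * 2)) t :
  adjmx phi *m phi = 1%:M -> ~ is_product phi ->
  is_tester X -> (forall i, psdmx (Y i)) -> 0 < t -> t <= 1 ->
  (forall i, qubit_tester phi i = t *: X i + (1 - t) *: Y i) ->
  forall i, X i = qubit_tester phi i.
Proof.
move=> unit_phi not_prod [psdX [rho [[_ tr_rho] sumX]]] psdY t_gt0 t_le1 decT.
set P := phi *m adjmx phi.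
have face i u : hform (qubit_tester phi i) u u = 0 -> hform (X i) u u = 0.
  by rewrite decT; apply: psdmx_comb_form0.
have X0 : X 0 = hform (X 0) phi phi *: P.
  apply: psdmx_supp_line => // u phi_u; apply: face.
  rewrite /qubit_tester /= hformZ /hform !mulmxA -(mulmxA _ (adjmx phi)) phi_u.
  by rewrite mulmx0 mxE mulr0.
set a := hform (X 0) phi phi in X0.
have X1_phi : X 1 *m phi = 0.
  apply: (psdmx_kernel (psdX 1) _).1; apply: face.
  rewrite /qubit_tester /= hformZ /hform mulmxBr mulmxBl mulmx1 !mulmxA unit_phi mul1mx.
  by rewrite unit_phi subrr mxE mulr0.
have rhoE : rho = a%:M.
  apply: entangled_tprod1_eigen not_prod _.
  by rewrite -sumX big_ord2 mulmxDl X1_phi addr0 X0 -scalemxAl /P -mulmxA unit_phi mulmx1.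
have a_half : a = 2^-1.
  move: tr_rho; rewrite rhoE mxtrace_scalar => /(congr1 (fun x => x / 2)).
  by rewrite div1r => <-; field.
have X1 : X 1 = tprod 1%:M rho - X 0 by rewrite -sumX big_ord2 [X 0 + _]addrC addrK.
move=> i; case: (ord2P i) => ->; first by rewrite X0 a_half.
by rewrite X1 rhoE tprod1_scalar X0 a_half -scalemx1 -scalerBr.
Qed.

Lemma product_qubit_tester_not_extremal (phi : 'cV[algC]_(2 * 2)) :
  adjmx phi *m phi = 1%:M -> is_product phi -> ~ extremal_tester (qubit_tester phi).
Proof.
move=> unit_phi [f [e phi_fe]] [_ extT].
have e_neq0 : e != 0.
  by apply: contra (unit_cV_neq0 unit_phi) => /eqP e0; rewrite phi_fe e0 linear0.
set P := phi *m adjmx phi; set E := lineproj e; set G := tprod (1%:M : 'M_2) E.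
have projP : orthoproj P := orthoproj_unit unit_phi.
have projE : orthoproj E := orthoproj_lineproj e_neq0.
have projG : orthoproj G := orthoproj_tprod (orthoproj1 _) projE.
have Gphi : G *m phi = phi.
  by rewrite phi_fe; have := tprodE (1%:M : 'M_2) f E e; rewrite mul1mx lineprojK.
have GP : G *m P = P by rewrite /P mulmxA Gphi.
pose T1 (i : 'I_2) := if i == 0 then P else G - P.
pose T2 (i : 'I_2) := if i == 0 then 0 else tprod (1%:M : 'M_2) (1%:M - E).
have densE : density E.
  by split; [exact: psdmx_orthoproj | exact: mxtrace_lineproj].
have densE' : density (1%:M - E).
  split; first exact/psdmx_orthoproj/orthoprojB/mul1mx/projE/orthoproj1.
  by rewrite raddfB /= mxtrace1 mxtrace_lineproj // mulr2n addrK.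
have testerT1 : is_tester T1.
  apply: (is_tester2 densE); rewrite /T1 /=; first exact: psdmx_orthoproj.
    exact/psdmx_orthoproj/orthoprojB.
  by rewrite addrC subrK.
have testerT2 : is_tester T2.
  apply: (is_tester2 densE'); rewrite /T2 /= ?add0r //; first exact/psdmx_orthoproj/orthoproj0.
  exact/psdmx_orthoproj/orthoproj_tprod/orthoprojB/mul1mx/projE/orthoproj1/orthoproj1.
have GE : G + tprod (1%:M : 'M_2) (1%:M - E) = 1%:M.
  by rewrite /G -linearD addrC subrK; exact: tprod1.
have half01 : 0 < (2 : algC)^-1 < 1 by rewrite invr_gt0 ltr0n invf_lt1 ?ltr0n ?ltr1n.
have half : 1 - (2 : algC)^-1 = 2^-1 by field.
have decT i : qubit_tester phi i = 2^-1 *: T1 i + (1 - 2^-1) *: T2 i.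
  rewrite half; case: (ord2P i) => ->; rewrite /T1 /T2 /=; first by rewrite scaler0 addr0.
  by rewrite -scalerDr addrAC GE.
have [T1P _] := extT T1 T2 2^-1 testerT1 testerT2 half01 decT 0.
have /eqP := congr1 (mulmx^~ phi) T1P.
rewrite /T1 /= /P -scalemxAl -mulmxA unit_phi mulmx1 -subr_eq0 -{1}(scale1r phi).
rewrite -scalerBl scaler_eq0 (negbTE (unit_cV_neq0 unit_phi)) orbF half.
by rewrite invr_eq0 pnatr_eq0.
Qed.

Theorem mainTheorem11 (phi : 'cV[algC]_(2 * 2)) :
  adjmx phi *m phi = 1%:M ->
  (extremal_tester (qubit_tester phi) <->
   ~ exists (f e : 'cV[algC]_2), phi = tprod f e).
Proof.
move=> unit_phi; split.
  by move=> extT prod_phi; exact: product_qubit_tester_not_extremal unit_phi prod_phi extT.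
move=> not_prod; split; first exact: qubit_tester_is_tester.
move=> T' T'' t testerT' testerT'' /andP[t_gt0 t_lt1] decT i; split.
  exact: qubit_tester_summand_eq unit_phi not_prod testerT' testerT''.1 t_gt0 (ltW t_lt1) decT i.
apply: (qubit_tester_summand_eq unit_phi not_prod testerT'' testerT'.1 (t := 1 - t)).
- by rewrite subr_gt0.
- by rewrite gerBl ltW.
- by move=> j; rewrite subKr addrC decT.
Qed.
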